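(* Let $(\mathbb S,+,\cdot)$ be an S-Ring. Then $0\neq 1$.
   Context: An S-Structure is a triple $(\mathbb S,+,\cdot)$ where $\mathbb S$ is a set and $+,\cdot$ are binary operations on $\mathbb S$ such that: $(\mathbb S,+)$ is a commutative group with identity $0$ (the inverse of $s$ is written $-s$, and $s-t:=s+(-t)$); $\mathbb S$ is closed under $\cdot$; and there exists $s\in\mathbb S$ with $0\cdot s\neq 0$ or $s\cdot 0\neq 0$. Multiplication binds tighter than addition. The structures considered come with a distinguished element of $\mathbb S$ denoted $1$. It is Commutative if $s\cdot t=t\cdot s$ for all $s,t$. For a Commutative S-Structure and $\alpha\in\mathbb S$, put $\mathbb S_\alpha=\{s\in\mathbb S:0\cdot s=s\cdot 0=\alpha\}$ and $\Lambda=\{\alpha\in\mathbb S:\mathbb S_\alpha\neq\emptyset\}$. Wheel Distributive: $s\cdot(t+r)+(s\cdot 0)=(s\cdot t)+(s\cdot r)$ for all $s,t,r\in\mathbb S$. S-Associative: for all $m,n\in\mathbb S_0$ and $s\in\mathbb S$, $m\cdot(n\cdot s)=(m\cdot n)\cdot s-([(m-1)\cdot(n-1)]\cdot(0\cdot s))$. Base: if $\mathbb S_0\neq\emptyset$ and $\alpha\in\Lambda$, $q\in\mathbb S_\alpha$ is a Base for $\mathbb S_\alpha$ if $q+\beta\in\mathbb S_\alpha$ for all $\beta\in\mathbb S_0$ and every $s\in\mathbb S_\alpha$ equals $q+\beta$ for some $\beta\in\mathbb S_0$. Coordinated: $\mathbb S_0\neq\emptyset$ and every $\mathbb S_\alpha$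 with $\alpha\in\Lambda$ has a Base. Standard Bases: a Coordinated Commutative S-Structure has Standard Bases if there is a specified element $q_0(1)\in\mathbb S_1$ which is a Base for $\mathbb S_1$, and for every $\alpha\in\Lambda$ the element $q_0(\alpha):=\alpha\cdot(q_0(1)+1)-1$ lies in $\mathbb S_\alpha$ and is a Base for $\mathbb S_\alpha$. An Essential S-Structure is an S-Structure that is Commutative, Wheel Distributive, S-Associative, has Standard Bases (in particular is Coordinated), satisfies $0,1\in\mathbb S_0$, and satisfies $\mathbb S_0=\{1\cdot x:x\in\mathbb S_0\}$. A Unity is an element $e\in\Lambda$ with $e\cdot s=s\cdot e=s$ for all $s\in\mathbb S$. An S-Ring is an Essential S-Structure which has a Unity. *)

(* the additive group (S,+) is a zmodType; the S-multiplication
   is an arbitrary binary operation [mul] (NOT the ring multiplication), and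
   [one] is the distinguished element "1". *)
From HB Require Import structures.
From mathcomp Require Import all_boot all_algebra.
Set Implicit Arguments. Unset Strict Implicit. Unset Printing Implicit Defensive.
Import GRing.Theory.
Local Open Scope ring_scope.

Section SStructures.
Variables (S : zmodType) (mul : S -> S -> S) (one : S).

(* closure under mul is automatic since mul : S -> S -> S *)
Definition is_SStructure : Prop :=
  exists s : S, mul 0 s <> 0 \/ mul s 0 <> 0.

Definition Commutative : Prop := forall s t : S, mul s t = mul t s.

Definition Salpha (alpha : S) : S -> Prop :=
  fun s => mul 0 s = alpha /\ mul s 0 = alpha.

Definition Lambda (alpha : S) : Prop := exists s, Salpha alpha s.

Definition WheelDistributive : Prop :=
  forall s t r : S, mul s (t + r) + mul s 0 = mul s t + mul s r.

Definition SAssociative : Prop :=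
  forall m n s : S, Salpha 0 m -> Salpha 0 n ->
    mul m (mul n s) = mul (mul m n) s - mul (mul (m - one) (n - one)) (mul 0 s).

Definition IsBase (alpha q : S) : Prop :=
  Salpha alpha q /\
  (forall beta, Salpha 0 beta -> Salpha alpha (q + beta)) /\
  (forall s, Salpha alpha s -> exists beta, Salpha 0 beta /\ s = q + beta).

Definition Coordinated : Prop :=
  (exists b, Salpha 0 b) /\ (forall alpha, Lambda alpha -> exists q, IsBase alpha q).

Definition q0 (q01 alpha : S) : S := mul alpha (q01 + one) - one.

Definition StandardBases : Prop :=
  Coordinated /\
  exists q01 : S, Salpha one q01 /\ IsBase one q01 /\
    (forall alpha, Lambda alpha ->
       Salpha alpha (q0 q01 alpha) /\ IsBase alpha (q0 q01 alpha)).

Definition Essential : Prop :=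
  is_SStructure /\ Commutative /\ WheelDistributive /\ SAssociative /\
  StandardBases /\ Salpha 0 0 /\ Salpha 0 one /\
  (forall x, Salpha 0 x <-> exists y, Salpha 0 y /\ x = mul one y).

Definition Unity (e : S) : Prop :=
  Lambda e /\ forall s, mul e s = s /\ mul s e = s.

Definition SRing : Prop := Essential /\ exists e, Unity e.

End SStructures.

From mathcomp Require Import all_boot all_algebra.
Set Implicit Arguments. Unset Strict Implicit. Unset Printing Implicit Defensive.
Import GRing.Theory.
Local Open Scope ring_scope.

(* A unity e lies in S_0, so S-associativity may be applied with m = n = e;
   since e acts as the identity this collapses to ((e - 1)(e - 1))(0 s) = 0.
   If 1 = 0 the left-hand side is 0 s, so 0 annihilates everything, which by
   commutativity contradicts the defining axiom of an S-Structure. *)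

Lemma unity_Salpha0 (S : zmodType) (mul : S -> S -> S) (e : S) :
  Unity mul e -> Salpha mul 0 e.
Proof. by case=> _ He; split; [case: (He 0) | case: (He 0)]. Qed.

Lemma SAssociative_unity (S : zmodType) (mul : S -> S -> S) (one e : S) :
  SAssociative mul one -> Unity mul e ->
  forall s, mul (mul (e - one) (e - one)) (mul 0 s) = 0.
Proof.
move=> Hassoc He s; have He0 := unity_Salpha0 He.
have := Hassoc e e s He0 He0.
rewrite !(proj1 (proj2 He _)) -{1}[s]subr0 => /addrI /oppr_inj.
by move<-.
Qed.

Lemma zero_annihilator_not_SStructure (S : zmodType) (mul : S -> S -> S) :
  Commutative mul -> (forall s, mul 0 s = 0) -> ~ is_SStructure mul.
Proof. by move=> Hcomm H0 [s]; rewrite [mul s 0]Hcomm H0; case. Qed.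

Theorem theorem3p2p2 (S : zmodType) (mul : S -> S -> S) (one : S) :
  SRing mul one -> (0 : S) <> one.
Proof.
move=> [[Hstr [Hcomm [_ [Hassoc _]]]] [e He]] one0.
apply: (zero_annihilator_not_SStructure Hcomm _ Hstr) => s.
have := SAssociative_unity Hassoc He s.
by rewrite -one0 !subr0 !(proj1 (proj2 He _)).
Qed.
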